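(* Let $n\ge2$, $s\in(0,1)$, $0<\lambda\le\Lambda<\infty$, and let $L$ be an operator of the form $Lu(x)=\mathrm{P.V.}\int_{\mathbb{R}^n}(u(x)-u(x+y))K(y)\,dy$ with $K(y)=K(-y)$ and $\lambda|y|^{-n-2s}\le K(y)\le\Lambda|y|^{-n-2s}$ for all $y$. Let $R>0$, $0<\kappa<R$, and let $\Omega\subset\mathbb{R}^n$ be an open set satisfying property $(\mathcal{P}_{R,\kappa})$: for all $0<r<R$ and all $z\in\partial\Omega$ there exists $x_{r,z}\in\Omega^c$ with $B_{\kappa r}(x_{r,z})\subset\Omega^c\cap B_r(z)$. Then there exist $d_0=d_0(s,R,\Omega)>0$ and $c_0=c_0(n,s,\lambda,\kappa)>0$ such that \[ L\chi_\Omega(x)\ge c_0\, d_\Omega(x)^{-2s}\qquad\text{for all }x\in\Omega\text{ with } d_\Omega(x)<d_0. \]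
   Context: $\chi_\Omega$ is the indicator function of $\Omega$ and $d_\Omega(x)=\mathrm{dist}(x,\Omega^c)$. *)

From HB Require Import structures.
From mathcomp Require Import all_boot all_order all_algebra.
From mathcomp Require Import all_classical all_reals all_analysis.
Set Implicit Arguments. Unset Strict Implicit. Unset Printing Implicit Defensive.
Import Order.TTheory GRing.Theory Num.Theory.
Import numFieldNormedType.Exports.
Local Open Scope classical_set_scope.
Local Open Scope ring_scope.

Section Rn.
Variable R : realType.

Definition vadd n (x y : n.-tuple R) : n.-tuple R :=
  [tuple (tnth x i + tnth y i) | i < n].
Definition vsub n (x y : n.-tuple R) : n.-tuple R :=
  [tuple (tnth x i - tnth y i) | i < n].

Definition enorm n (x : n.-tuple R) : R :=
  Num.sqrt (\sum_(i < n) tnth x i ^+ 2).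

Definition eball n (x : n.-tuple R) (r : R) : set (n.-tuple R) :=
  [set y | enorm (vsub y x) < r].

Definition eopen n (O : set (n.-tuple R)) : Prop :=
  forall x, O x -> exists2 r : R, 0 < r & eball x r `<=` O.

Definition eboundary n (O : set (n.-tuple R)) : set (n.-tuple R) :=
  [set z | forall r : R, 0 < r ->
     (exists y, O y /\ eball z r y) /\ (exists y, ~ O y /\ eball z r y)].

Definition chi n (O : set (n.-tuple R)) (x : n.-tuple R) : R :=
  if `[< O x >] then 1 else 0.

(* d_O(x) = dist(x, O^c), as an extended real (+oo if O^c is empty) *)
Definition dist_compl n (O : set (n.-tuple R)) (x : n.-tuple R) : \bar R :=
  ereal_inf [set (enorm (vsub x y))%:E | y in ~` O].

Definition propP n (Rad kappa : R) (O : set (n.-tuple R)) : Prop :=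
  forall r : R, 0 < r -> r < Rad -> forall z, eboundary O z ->
    exists x, ~ O x /\ eball x (kappa * r) `<=` (~` O) `&` eball z r.

(* Iterated Lebesgue integral over R^n (n-fold, via Tonelli this is the
   integral w.r.t. n-dimensional Lebesgue measure for nonnegative
   measurable functions). *)
Fixpoint iint (n : nat) : (n.-tuple R -> \bar R) -> \bar R :=
  match n with
  | 0 => fun g => g [tuple]
  | m.+1 => fun g =>
      (\int[@lebesgue_measure R]_t iint (fun v : m.-tuple R => g (cons_tuple t v)))%E
  end.

Definition Rn_integral n (f : n.-tuple R -> \bar R) : \bar R :=
  (iint (fun y => maxe (f y) 0) - iint (fun y => maxe (- f y) 0))%E.

Definition trunc_op n (K : n.-tuple R -> R) (u : n.-tuple R -> R)
  (x : n.-tuple R) (eps : R) : \bar R :=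
  Rn_integral (fun y => if eps < enorm y then ((u x - u (vadd x y)) * K y)%:E
                        else 0%E).

Definition Lop n (K : n.-tuple R -> R) (u : n.-tuple R -> R) (x : n.-tuple R)
  : \bar R := lim (trunc_op K u x @ 0^'+).

End Rn.

(* Openness of Omega gives d := d_Omega(x) > 0, and chi(x) - chi(x + y) vanishes
   for |y| < d, so all truncations at levels below d coincide: the principal
   value exists and is the integral of K over Omega^c - x, whose integrand is
   nonnegative.  A crossing point z of the segment from x to a point of
   Omega^c at distance < 2d lies on the boundary, and property (P) at scale
   r = d yields a ball of radius kappa d inside Omega^c and within d of z.
   On that ball |y| <= 3 n d, hence K(y) >= lambda (3 n d)^(-n-2s), and
   integrating over an inscribed cube of side kappa d / n gives
   lambda (3 n)^(-n-2s) (kappa / n)^n d^(-2s). *)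

From HB Require Import structures.
From mathcomp Require Import all_boot all_order all_algebra.
From mathcomp Require Import all_classical all_reals all_analysis.
From mathcomp.algebra_tactics Require Import ring lra.
Import Order.TTheory GRing.Theory Num.Theory.
Import numFieldNormedType.Exports.
Local Open Scope classical_set_scope.
Local Open Scope ring_scope.
Set Implicit Arguments.
Unset Strict Implicit.
Unset Printing Implicit Defensive.

Section real_lemmas.
Context {R : realType}.

Lemma ler_powR_npos (r a b : R) : r <= 0 -> 0 < a <= b -> b `^ r <= a `^ r.
Proof.
move=> r_le0 /andP[a0 ab]; have b0 := lt_le_trans a0 ab.
rewrite -[r]opprK (powRN a) (powRN b) lef_pV2 ?posrE ?powR_gt0//.
by apply: ge0_ler_powR; rewrite ?oppr_ge0// nnegrE ltW.
Qed.

Lemma scale_powR_exprn (lam C kappa a d : R) (n : nat) : 0 <= C -> 0 < d ->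
  lam * (C * d) `^ a * (kappa * d / n%:R) ^+ n
  = lam * C `^ a * (kappa / n%:R) ^+ n * d `^ (a + n%:R).
Proof.
move=> C0 d0; rewrite powRM ?(ltW d0)// powRD ?(gt_eqF d0) ?implybT//.
rewrite powR_mulrn ?(ltW d0)//.
by rewrite [kappa * d / _]mulrAC exprMn; ring.
Qed.

Lemma exists_crossing (A : set R) : A 0 -> ~ A 1 ->
  exists2 t, 0 <= t <= 1 & forall e, 0 < e ->
    (exists2 u, A u & `|t - u| < e) /\ (exists2 u, ~ A u & `|t - u| < e).
Proof.
move=> A0 nA1.
pose S := [set t | 0 <= t <= 1 /\ forall u, 0 <= u <= t -> A u].
have S0 : S 0.
  split=> [|u /andP[u0 u_le0]]; first by rewrite lexx ler01.
  by have -> : u = 0 by apply/eqP; rewrite eq_le u0 u_le0.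
have supS : has_sup S by split; [exists 0 | exists 1 => t [/andP[]]].
have le_sup t : S t -> t <= sup S by move=> St; exact: sup_upper_bound.
have sup_le1 : sup S <= 1 by apply: ge_sup; [exists 0 | move=> t [/andP[]]].
have sup_ge0 : 0 <= sup S by exact: le_sup.
have below_sup u : 0 <= u < sup S -> A u.
  move=> /andP[u0 u_lt]; have [|t St ut] := @sup_adherent _ S (sup S - u) _ supS.
    by rewrite subr_gt0.
  by apply: St.2; rewrite u0/=; lra.
exists (sup S) => [|e e0]; first by rewrite sup_ge0.
split.
  have [t St] := sup_adherent e0 supS; have t_le := le_sup _ St.
  exists t; first by apply: St.2; rewrite lexx andbT; case: St => /andP[].
  by rewrite ger0_norm ?subr_ge0//; lra.
apply: contrapT => all_A.
have near_A u : `|sup S - u| < e -> A u.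
  by move=> ue; apply: contrapT => nAu; apply: all_A; exists u.
have [sup1|sup_lt1] := eqVneq (sup S) 1.
  by apply: nA1; apply: near_A; rewrite sup1 subrr normr0.
pose h := Num.min (1 - sup S) e / 2.
have h0 : 0 < h by rewrite divr_gt0// lt_min subr_gt0 e0 lt_neqAle sup_lt1 sup_le1.
have h_le : h <= (1 - sup S) / 2 /\ h <= e / 2.
  by split; rewrite ler_pM2r// ge_min lexx ?orbT.
suff /le_sup : S (sup S + h) by lra.
split=> [|u /andP[u0 u_le]]; first by apply/andP; split; lra.
have [u_lt|u_ge] := ltP u (sup S); first by apply: below_sup; rewrite u0.
by apply: near_A; rewrite ler0_norm ?subr_le0//; lra.
Qed.

End real_lemmas.

Section iterated_integral.
Context {R : realType}.
Local Open Scope ereal_scope.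

(* No measurability is needed: a nonnegative integral is a supremum over the
   simple functions below the integrand. *)
Lemma ge0_le_integralT d (T : measurableType d) (mu : {measure set T -> \bar R})
    (f g : T -> \bar R) :
  (forall t, 0 <= f t) -> (forall t, f t <= g t) ->
  \int[mu]_t f t <= \int[mu]_t g t.
Proof.
move=> f0 fg; have g0 t : 0 <= g t by exact: le_trans (fg t).
rewrite !ge0_integralTE//; apply: ereal_sup_le => _ [h /= hf <-].
by exists h => //= t; exact: le_trans (hf t) (fg t).
Qed.

Lemma iint_ge0 m (f : m.-tuple R -> \bar R) : (forall v, 0 <= f v) -> 0 <= iint f.
Proof.
elim: m f => [|m IH] f f0 /=; first exact: f0.
by apply: integral_ge0 => t _; exact: IH.
Qed.

Lemma le_iint m (f g : m.-tuple R -> \bar R) :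
  (forall v, 0 <= f v) -> (forall v, f v <= g v) -> iint f <= iint g.
Proof.
elim: m f g => [|m IH] f g f0 fg /=; first exact: fg.
by apply: ge0_le_integralT => t; [exact: iint_ge0 | exact: IH].
Qed.

Lemma iint0 m : iint (fun _ : m.-tuple R => 0) = 0.
Proof.
elim: m => [|m IH] //=.
by under eq_integral do rewrite IH; exact: integral0.
Qed.

Lemma Rn_integral_ge0 m (f : m.-tuple R -> \bar R) :
  (forall v, 0 <= f v) -> Rn_integral f = iint f.
Proof.
move=> f0; rewrite /Rn_integral.
have -> : (fun v => maxe (f v) 0) = f by apply/funext => v; rewrite max_l.
have -> : (fun v => maxe (- f v) 0) = fun=> 0.
  by apply/funext => v; rewrite max_r ?oppe_le0.
by rewrite iint0 sube0.
Qed.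

Lemma integral_indic_oo (c a b : R) : (0 <= c)%R -> (a <= b)%R ->
  \int[@lebesgue_measure R]_t (c * \1_(`]a, b[) t)%:E = (c * (b - a))%:E.
Proof.
move=> c0 ab.
have mu_ab : @lebesgue_measure R `]a, b[%classic = (b - a)%:E.
  rewrite lebesgue_measure_itv/= lte_fin.
  by case: ltgtP ab => // -> _; rewrite subrr.
have := @integralZl_indic _ _ R (@lebesgue_measure R) setT measurableT
  (fun=> `]a, b[%classic) c; rewrite /= => ->//; last by rewrite ltNge c0.
by rewrite integral_indic// setIT EFinM; congr (_ * _); exact: mu_ab.
Qed.

Lemma iint_box m (a b : nat -> R) (c : R) :
  (0 <= c)%R -> (forall k, a k <= b k)%R ->
  iint (fun v : m.-tuple R => (c * \prod_(i < m) \1_(`]a i, b i[) (tnth v i))%:E)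
  = (c * \prod_(i < m) (b i - a i))%:E.
Proof.
elim: m a b c => [|m IH] a b c c0 ab /=; first by rewrite !big_ord0.
have slice t : iint (fun v : m.-tuple R =>
      (c * \prod_(i < m.+1) \1_(`]a i, b i[) (tnth (cons_tuple t v) i))%:E)
    = ((c * \prod_(i < m) (b i.+1 - a i.+1)) * \1_(`]a 0%N, b 0%N[) t)%:E.
  transitivity (iint (fun v : m.-tuple R => ((c * \1_(`]a 0%N, b 0%N[) t) *
      \prod_(i < m) \1_(`]a i.+1, b i.+1[) (tnth v i))%:E)).
    congr iint; apply/funext => v; rewrite big_ord_recl mulrA.
    by congr (_ * _ * _)%:E; apply: eq_bigr => i _; rewrite tnthS.
  by rewrite (IH (fun k => a k.+1) (fun k => b k.+1)) ?mulr_ge0 ?indic_ge0// mulrAC.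
under eq_integral do rewrite slice.
rewrite integral_indic_oo ?mulr_ge0 ?prodr_ge0// => [|i _]; last by rewrite subr_ge0.
by rewrite big_ord_recl; congr (_%:E); ring.
Qed.
Lemma iint_ge_box m (f : m.-tuple R -> \bar R) (a b : nat -> R) (c : R) :
  (0 <= c)%R -> (forall k, a k <= b k)%R -> (forall v, 0 <= f v) ->
  (forall v, (forall i : 'I_m, a i < tnth v i < b i)%R -> c%:E <= f v) ->
  (c * \prod_(i < m) (b i - a i))%:E <= iint f.
Proof.
move=> c0 ab f0 f_box; rewrite -iint_box//; apply: le_iint => v.
  by rewrite lee_fin mulr_ge0// prodr_ge0// => i _; exact: indic_ge0.
have [v_in|/existsNP[i v_i]] := pselect (forall i : 'I_m, a i < tnth v i < b i)%R.
  rewrite big1 ?mulr1 ?f_box// => i _.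
  by rewrite indicE mem_set//= in_itv/= v_in.
by rewrite (bigD1 i)//= indicE memNset ?mul0r ?mulr0//= in_itv/=.
Qed.

End iterated_integral.

Section euclidean.
Context {R : realType} {n : nat}.
Implicit Types (c u v w x y : n.-tuple R).

Lemma enorm_ge0 v : 0 <= enorm v.
Proof. exact: sqrtr_ge0. Qed.

Lemma enorm0 : enorm [tuple (0 : R) | _ < n] = 0.
Proof. by rewrite /enorm big1 ?sqrtr0// => i _; rewrite tnth_mktuple expr0n. Qed.

Lemma enorm_vsubC u v : enorm (vsub u v) = enorm (vsub v u).
Proof.
rewrite /enorm; congr Num.sqrt; apply: eq_bigr => i _.
by rewrite !tnth_mktuple -sqrrN opprB.
Qed.

Lemma vsub_vaddl x v : vsub (vadd x v) x = v.
Proof. by apply: eq_from_tnth => i; rewrite !tnth_mktuple addrC addKr. Qed.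

Lemma enormZ (a : R) v w : (forall i, tnth w i = a * tnth v i) ->
  enorm w = `|a| * enorm v.
Proof.
move=> wE; rewrite /enorm -sqrtr_sqr -sqrtrM ?sqr_ge0//; congr Num.sqrt.
by rewrite mulr_sumr; apply: eq_bigr => i _; rewrite wE exprMn.
Qed.

Lemma norm_tnth_le_enorm v i : `|tnth v i| <= enorm v.
Proof.
rewrite /enorm -sqrtr_sqr ler_wsqrtr// (bigD1 i)//= lerDl.
by rewrite sumr_ge0// => j _; exact: sqr_ge0.
Qed.

Lemma enorm_le_norm_tnth (M : R) v : 0 <= M -> (forall i, `|tnth v i| <= M) ->
  enorm v <= n%:R * M.
Proof.
move=> M0 vM; rewrite /enorm -(ger0_norm (mulr_ge0 (ler0n _ n) M0)) -sqrtr_sqr.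
rewrite ler_wsqrtr//; apply: (@le_trans _ _ (\sum_(i < n) M ^+ 2)).
- apply: ler_sum => i _.
  by rewrite -[_ ^+ 2]real_normK ?num_real// ler_sqr ?nnegrE ?vM.
- rewrite sumr_const card_ord -[_ *+ n]mulr_natl exprMn; apply: ler_wpM2r; first exact: sqr_ge0.
  by rewrite -natrX ler_nat expnS -{1}[n]muln1 leq_mul2l; case: (n).
Qed.

Lemma enorm_vsub_le u v w :
  enorm (vsub u w) <= n%:R * (enorm (vsub u v) + enorm (vsub v w)).
Proof.
apply: enorm_le_norm_tnth => [|i]; first by rewrite addr_ge0 ?enorm_ge0.
have -> : tnth (vsub u w) i = tnth (vsub u v) i + tnth (vsub v w) i.
  by rewrite !tnth_mktuple addrA subrK.
by rewrite (le_trans (ler_normD _ _))// lerD ?norm_tnth_le_enorm.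
Qed.

Lemma cube_sub_eball (rho : R) c v : (0 < n)%N -> 0 < rho ->
  (forall i, `|tnth (vsub v c) i| <= rho / (2 * n%:R)) -> eball c rho v.
Proof.
move=> n_gt0 rho0 vc; rewrite /eball/=.
have n0 : n%:R != 0 :> R by rewrite pnatr_eq0 -lt0n.
have q0 : 0 <= rho / (2 * n%:R) by rewrite divr_ge0 ?(ltW rho0) ?mulr_ge0.
apply: le_lt_trans (enorm_le_norm_tnth q0 vc) _.
have -> : n%:R * (rho / (2 * n%:R)) = rho / 2 by field.
lra.
Qed.

End euclidean.

Section segment.
Context {R : realType} {n : nat}.
Implicit Types (x y : n.-tuple R).

Definition segment x y (t : R) : n.-tuple R :=
  [tuple tnth x i + t * (tnth y i - tnth x i) | i < n].

Lemma segment0 x y : segment x y 0 = x.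
Proof. by apply: eq_from_tnth => i; rewrite tnth_mktuple mul0r addr0. Qed.

Lemma segment1 x y : segment x y 1 = y.
Proof. by apply: eq_from_tnth => i; rewrite tnth_mktuple mul1r addrC subrK. Qed.

Lemma enorm_segment x y t u :
  enorm (vsub (segment x y t) (segment x y u)) = `|t - u| * enorm (vsub y x).
Proof. by apply: enormZ => i; rewrite !tnth_mktuple; ring. Qed.

Lemma eboundary_between (Om : set (n.-tuple R)) x y : Om x -> ~ Om y ->
  exists z, eboundary Om z /\ enorm (vsub z x) <= enorm (vsub y x).
Proof.
move=> Ox nOy; set N := enorm (vsub y x); have N0 : 0 <= N by exact: enorm_ge0.
have := exists_crossing (A := Om \o segment x y); rewrite /= segment0 segment1.
move=> /(_ Ox nOy) [t /andP[t0 t1] cross].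
exists (segment x y t); split; last first.
  by rewrite -[X in vsub _ X](segment0 x y) enorm_segment subr0 ger0_norm// ler_piMl.
move=> r r0; have e0 : 0 < r / (N + 1) by rewrite divr_gt0//; lra.
have ball_seg u : `|t - u| < r / (N + 1) -> eball (segment x y t) r (segment x y u).
  move=> tu; rewrite /eball/= enorm_segment distrC.
  rewrite ltr_pdivlMr in tu; last by lra.
  by apply: le_lt_trans tu; rewrite ler_wpM2l// lerDl.
have [[u Au tu] [v nAv tv]] := cross _ e0.
by split; [exists (segment x y u) | exists (segment x y v)]; split=> //; exact: ball_seg.
Qed.

End segment.

Section distance.
Context {R : realType} {n : nat}.
Variables (Om : set (n.-tuple R)) (x : n.-tuple R).

Lemma dist_compl_le (d : R) : dist_compl Om x = d%:E ->
  forall w, ~ Om w -> d <= enorm (vsub x w).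
Proof. by move=> dx w nOw; rewrite -lee_fin -dx; apply: ereal_inf_lbound; exists w. Qed.

Lemma dist_compl_lt (d r : R) : dist_compl Om x = d%:E -> d < r ->
  exists2 y, ~ Om y & enorm (vsub x y) < r.
Proof.
move=> dx dr; have /ereal_inf_lt[_ [y nOy <-]] : (dist_compl Om x < r%:E)%E.
  by rewrite dx lte_fin.
by rewrite lte_fin; exists y.
Qed.

Lemma dist_compl_gt0 (a : R) : eopen Om -> Om x -> (dist_compl Om x < a%:E)%E ->
  exists2 d, 0 < d & dist_compl Om x = d%:E.
Proof.
move=> Om_open Ox; have [r r0 ball_r] := Om_open x Ox.
have : (r%:E <= dist_compl Om x)%E.
  apply: le_ereal_inf_tmp => _ [w nOw <-]; rewrite lee_fin leNgt; apply/negP => wr.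
  by apply: nOw; apply: ball_r; rewrite /eball/= enorm_vsubC.
case: (dist_compl Om x) => [d||]//; rewrite lee_fin => rd _.
by exists d => //; exact: lt_le_trans rd.
Qed.

End distance.

Section indicator.
Context {R : realType} {n : nat}.
Variable Om : set (n.-tuple R).

Lemma chi_in w : Om w -> chi Om w = 1.
Proof. by move=> Ow; rewrite /chi asboolT. Qed.

Lemma chi_out w : ~ Om w -> chi Om w = 0.
Proof. by move=> nOw; rewrite /chi asboolF. Qed.

Lemma chi_le1 w : chi Om w <= 1.
Proof. by rewrite /chi; case: asboolP. Qed.

End indicator.

Section truncation.
Context {R : realType} {n : nat}.
Variables (K : n.-tuple R -> R) (Om : set (n.-tuple R)) (x : n.-tuple R) (d : R).
Hypotheses (Ox : Om x) (d_le : forall w, ~ Om w -> d <= enorm (vsub x w)).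

Lemma trunc_op_chi_eq e e' : 0 < e < d -> 0 < e' < d ->
  trunc_op K (chi Om) x e = trunc_op K (chi Om) x e'.
Proof.
move=> /andP[e0 ed] /andP[e'0 e'd]; congr Rn_integral; apply/funext => v.
have [vd|dv] := ltP (enorm v) d.
  have Oxv : Om (vadd x v).
    by apply: contrapT => /d_le; rewrite enorm_vsubC vsub_vaddl; lra.
  by rewrite !chi_in// subrr mul0r; case: ifP; case: ifP.
have ev : e < enorm v by lra.
have e'v : e' < enorm v by lra.
by rewrite ev e'v.
Qed.

Lemma trunc_op_chi_cvg e : 0 < e < d ->
  trunc_op K (chi Om) x @ 0^'+ --> trunc_op K (chi Om) x e.
Proof.
move=> e_in; have d0 : 0 < d by case/andP: e_in; exact: lt_trans.
apply: cvg_near_cst; near=> e'; apply: trunc_op_chi_eq => //; apply/andP; split.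
- by near: e'; exact: nbhs_right_gt.
- by near: e'; exact: nbhs_right_lt.
Unshelve. all: by end_near.
Qed.

End truncation.

Section lower_bound.
Context {R : realType} {n : nat}.
Variables (K : n.-tuple R -> R) (lam al : R).
Hypotheses (lam0 : 0 <= lam) (al_le0 : al <= 0).
Hypothesis K_ge : forall v, v <> [tuple (0 : R) | _ < n] -> lam * enorm v `^ al <= K v.

Lemma K_ge_powR (M : R) v : 0 < enorm v <= M -> lam * M `^ al <= K v.
Proof.
move=> /andP[v0 vM]; apply: le_trans (K_ge _) => [|v_eq0].
  by rewrite ler_wpM2l// ler_powR_npos// v0.
by move: v0; rewrite v_eq0 enorm0 ltxx.
Qed.

Lemma trunc_op_chi_ge_ball (Om : set (n.-tuple R)) x p (e rho M : R) :
  (0 < n)%N -> Om x -> 0 < e -> 0 < rho ->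
  (forall w, ~ Om w -> e < enorm (vsub w x)) ->
  eball p rho `<=` ~` Om -> (forall w, eball p rho w -> enorm (vsub w x) <= M) ->
  ((lam * M `^ al * (rho / n%:R) ^+ n)%:E <= trunc_op K (chi Om) x e)%E.
Proof.
move=> n_gt0 Ox e0 rho0 e_le ball_out ball_M.
pose f v := if e < enorm v then ((chi Om x - chi Om (vadd x v)) * K v)%:E else 0%E.
have f_ge0 v : (0 <= f v)%E.
  rewrite /f; case: ifPn => // ev; rewrite lee_fin mulr_ge0//.
    by rewrite chi_in// subr_ge0 chi_le1.
  apply: le_trans (@K_ge_powR (enorm v) v _); first by rewrite mulr_ge0// powR_ge0.
  by rewrite lexx andbT (lt_trans e0).
change ((lam * M `^ al * (rho / n%:R) ^+ n)%:E <= Rn_integral f)%E.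
rewrite Rn_integral_ge0//.
have n0 : n%:R != 0 :> R by rewrite pnatr_eq0 -lt0n.
(* the cube of side rho / n centred at p - x, which translation by x puts inside the ball *)
pose q := rho / (2 * n%:R); pose c := vsub p x.
pose a k := nth 0 c k - q; pose b k := nth 0 c k + q.
have -> : (rho / n%:R) ^+ n = \prod_(i < n) (b i - a i).
  rewrite (eq_bigr (fun=> rho / n%:R)) ?prodr_const ?card_ord// => i _.
  by rewrite /b /a /q; field.
have q0 : 0 < q by rewrite divr_gt0// mulr_gt0// ltr0n.
apply: iint_ge_box => [|k|//|v v_in]; first by rewrite mulr_ge0// powR_ge0.
  by rewrite /a /b; lra.
have xv_ball : eball p rho (vadd x v).
  apply: cube_sub_eball => // i; have := v_in i.
  rewrite /a /b /c -tnth_nth !tnth_mktuple ler_norml -/q => /andP[lo hi].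
  by apply/andP; split; lra.
have nOxv := ball_out _ xv_ball.
have := e_le _ nOxv; have := ball_M _ xv_ball; rewrite vsub_vaddl => vM ev.
rewrite /f ev chi_in// chi_out// subr0 mul1r lee_fin.
by apply: K_ge_powR; rewrite vM (lt_trans e0).
Qed.

End lower_bound.

Theorem lemma3p2 (R : realType) (n : nat) (hn : (2 <= n)%N) :
  exists (c0 : R -> R -> R -> R) (d0 : R -> R -> set (n.-tuple R) -> R),
    (forall s lam kappa : R, 0 < s < 1 -> 0 < lam -> 0 < kappa ->
       0 < c0 s lam kappa) /\
    (forall (s Rad : R) (Om : set (n.-tuple R)), 0 < s < 1 -> 0 < Rad ->
       0 < d0 s Rad Om) /\
    forall (s lam Lam : R) (K : n.-tuple R -> R) (Rad kappa : R)
           (Om : set (n.-tuple R)),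
      0 < s < 1 -> 0 < lam -> lam <= Lam ->
      measurable_fun setT K ->
      (forall y, K y = K (vsub [tuple (0 : R) | _ < n] y)) ->
      (forall y, y <> [tuple (0 : R) | _ < n] ->
         lam * enorm y `^ (- (n%:R) - 2 * s) <= K y /\
         K y <= Lam * enorm y `^ (- (n%:R) - 2 * s)) ->
      0 < Rad -> 0 < kappa -> kappa < Rad ->
      eopen Om -> propP Rad kappa Om ->
      forall x, Om x ->
        (dist_compl Om x < (d0 s Rad Om)%:E)%E ->
        cvg (trunc_op K (chi Om) x @ 0^'+) /\
        ((c0 s lam kappa * (fine (dist_compl Om x)) `^ (- (2 * s)))%:E
           <= Lop K (chi Om) x)%E.
Proof.
have n_gt0 : (0 < n)%N by exact: leq_trans hn.
have n0 : 0 < n%:R :> R by rewrite ltr0n.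
exists (fun s lam kappa => lam * (n%:R * 3) `^ (- n%:R - 2 * s) * (kappa / n%:R) ^+ n).
exists (fun s Rad _ => Rad).
split=> [s lam kappa _ lam0 kappa0|].
  by rewrite !mulr_gt0 ?powR_gt0 ?exprn_gt0 ?divr_gt0 ?mulr_gt0.
split=> // s lam Lam K Rad kappa Om /andP[s0 _] lam0 _ _ _ K_bound _ kappa0 _
  Om_open OmP x Ox dx_lt.
have [d d0 dx] := dist_compl_gt0 Om_open Ox dx_lt.
move: dx_lt; rewrite dx lte_fin /= => dRad.
have d_le := dist_compl_le dx.
have [y nOy xy] : exists2 y, ~ Om y & enorm (vsub x y) < 2 * d.
  by apply: dist_compl_lt dx _; lra.
have [z [zb zx]] := eboundary_between Ox nOy.
have [p [_ ball_p]] := OmP d d0 dRad z zb.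
have cvgL : trunc_op K (chi Om) x @ 0^'+ --> trunc_op K (chi Om) x (d / 2).
  by apply: (trunc_op_chi_cvg Ox d_le); lra.
split; first by apply/cvg_ex; eexists; exact: cvgL.
rewrite /Lop (cvg_lim _ cvgL)//=.
have -> : d `^ (- (2 * s)) = d `^ ((- n%:R - 2 * s) + n%:R) by congr (_ `^ _); ring.
rewrite -scale_powR_exprn ?mulr_ge0//.
have al_le0 : - n%:R - 2 * s <= 0 by lra.
apply: (trunc_op_chi_ge_ball (ltW lam0) al_le0 (fun v v0 => (K_bound v v0).1)) => //.
- by rewrite divr_gt0.
- by rewrite mulr_gt0.
- by move=> w /d_le; rewrite enorm_vsubC; lra.
- by move=> w /ball_p[].
move=> w /ball_p[_ wz]; rewrite -mulrA.
apply: le_trans (enorm_vsub_le w z x) _; rewrite ler_wpM2l ?ler0n//.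
by move: wz zx; rewrite /eball/= enorm_vsubC -[enorm (vsub y x)]enorm_vsubC; lra.
Qed.
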